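(* Let $\mathcal{S}\subset\mathbb{R}_{\ge0}$ be measurable with positive Lebesgue measure and let $\mathcal{G}$ be a convex class of probability distributions on $\mathbb{R}$ (i.e. $\lambda G_1+(1-\lambda)G_2\in\mathcal{G}$ for all $\lambda\in[0,1]$, $G_1,G_2\in\mathcal{G}$). Then $\mathrm{Tilt}[\mathcal{G}]=\{\mathrm{Tilt}[G]:G\in\mathcal{G}\}$ is also a convex class of probability distributions.
   Context: With $\varphi^{\mathrm{fold}}(z;\mu)=\varphi(z;\mu)+\varphi(-z;\mu)$, where $\varphi(z;\mu)$ is the $\mathrm{N}(\mu,1)$ density, and $\Phi(\mathcal{S};\mu)=\int_{\mathcal{S}}\varphi^{\mathrm{fold}}(z;\mu)dz$, the tilting of a prior $G$ is $\mathrm{Tilt}[G](d\mu)=\frac{\Phi(\mathcal{S};\mu)G(d\mu)}{\int\Phi(\mathcal{S};\mu')G(d\mu')}$. *)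

From HB Require Import structures.
From mathcomp Require Import all_boot all_order all_algebra.
From mathcomp Require Import all_classical all_reals all_analysis.
Set Implicit Arguments. Unset Strict Implicit. Unset Printing Implicit Defensive.
Import Order.TTheory GRing.Theory Num.Theory.
Import numFieldNormedType.Exports.
Local Open Scope classical_set_scope.
Local Open Scope ring_scope.

Section Tilt.
Variable R : realType.

Definition phi (z mu : R) : R :=
  expR (- ((z - mu) ^+ 2) / 2) / Num.sqrt (2 * pi).

Definition phi_fold (z mu : R) : R := phi z mu + phi (- z) mu.

Definition PhiS (S : set R) (mu : R) : \bar R :=
  (\int[lebesgue_measure]_(z in S) (phi_fold z mu)%:E)%E.

(* The normalizing constant is a finite positive real (0 < Phi <= 1 when
   S has positive measure and S is a subset of [0,oo)), hence `fine`. *)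
Definition Tilt (S : set R) (G : probability R R) (A : set R) : \bar R :=
  ((\int[G]_(m in A) PhiS S m) *
     ((fine (\int[G]_(m in setT) PhiS S m))^-1)%:E)%E.

Definition is_prob_distr (P : set R -> \bar R) : Prop :=
  exists p : probability R R, forall A, measurable A -> p A = P A.

Definition convex_class (C : set (set R -> \bar R)) : Prop :=
  forall P1 P2, C P1 -> C P2 -> forall l : R, 0 <= l <= 1 ->
    exists P, C P /\ forall A, measurable A ->
      P A = (l%:E * P1 A + (1 - l)%:E * P2 A)%E.

End Tilt.

From HB Require Import structures.
From mathcomp Require Import all_boot all_order all_algebra.
From mathcomp Require Import all_classical all_reals all_analysis.
From mathcomp Require Import measurable_realfun ring lra.
Set Implicit Arguments. Unset Strict Implicit. Unset Printing Implicit Defensive.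
Import Order.TTheory GRing.Theory Num.Theory.
Import numFieldNormedType.Exports.
Local Open Scope classical_set_scope.
Local Open Scope ring_scope.

(* Tilt[G] is G reweighted by the density mu |-> Phi(S;mu) / c_G, where
   c_G = \int Phi(S;mu) G(dmu); since 0 < Phi(S;.) <= 2, this is a probability.
   Tilting is not affine, but it maps mixtures to mixtures:
   Tilt[lam G1 + (1 - lam) G2] = l Tilt[G1] + (1 - l) Tilt[G2] with
   l = lam c1 / (lam c1 + (1 - lam) c2).  Conversely every l in [0, 1] arises
   from lam = l c2 / (l c2 + (1 - l) c1) in [0, 1], and convexity of the class
   provides the prior lam G1 + (1 - lam) G2. *)

Section reweight.
Variable R : realFieldType.

Definition reweight (l c1 c2 : R) := l * c2 / (l * c2 + (1 - l) * c1).

Let reweight_den_gt0 (l c1 c2 : R) : 0 <= l <= 1 -> 0 < c1 -> 0 < c2 ->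
  0 < l * c2 + (1 - l) * c1.
Proof. by move=> /andP[l0 l1] c10 c20; nra. Qed.

Lemma reweight_itv (l c1 c2 : R) : 0 <= l <= 1 -> 0 < c1 -> 0 < c2 ->
  0 <= reweight l c1 c2 <= 1.
Proof.
move=> l01 c10 c20; have D0 := reweight_den_gt0 l01 c10 c20.
case/andP: l01 => l0 l1.
rewrite /reweight ler_pdivrMr // mul1r.
by rewrite divr_ge0 ?mulr_ge0 ?(ltW D0) ?(ltW c20) //=; nra.
Qed.

Lemma reweight_ratio (l c1 c2 i1 i2 : R) : 0 <= l <= 1 -> 0 < c1 -> 0 < c2 ->
  (reweight l c1 c2 * i1 + (1 - reweight l c1 c2) * i2)
    / (reweight l c1 c2 * c1 + (1 - reweight l c1 c2) * c2)
  = l * (i1 / c1) + (1 - l) * (i2 / c2).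
Proof.
move=> l01 c10 c20; have D_neq0 := lt0r_neq0 (reweight_den_gt0 l01 c10 c20).
rewrite /reweight; have -> : l * c2 / (l * c2 + (1 - l) * c1) * c1
    + (1 - l * c2 / (l * c2 + (1 - l) * c1)) * c2
  = c1 * c2 / (l * c2 + (1 - l) * c1) by field.
by field; rewrite D_neq0 !lt0r_neq0.
Qed.

End reweight.

Section integral_gt0.
Local Open Scope ereal_scope.
Context d (T : measurableType d) (R : realType) (mu : {measure set T -> \bar R}).

Lemma integral_gt0 (D : set T) (g : T -> \bar R) : measurable D ->
  measurable_fun D g -> (forall x, D x -> 0 < g x) -> 0 < mu D ->
  0 < \int[mu]_(x in D) g x.
Proof.
move=> mD mg g_gt0 muD_gt0.
rewrite lt_neqAle integral_ge0 ?andbT => [|x Dx]; last exact/ltW/g_gt0.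
apply/eqP => /esym int0.
have /(ae_eq_integral_abs mu mD) : \int[mu]_(x in D) `|g x| = 0.
  rewrite -int0; apply: eq_integral => x /[!inE] Dx.
  by rewrite gee0_abs // ltW // g_gt0.
move=> /(_ mg) [N [mN muN0 DN]].
suff : mu D <= 0 by rewrite leNgt muD_gt0.
rewrite -muN0 le_measure ?inE // => x Dx; apply: DN => /(_ Dx) gx0.
by move: (g_gt0 x Dx); rewrite gx0 ltxx.
Qed.

End integral_gt0.

Section integral_mixture.
Local Open Scope ereal_scope.
Context d (T : measurableType d) (R : realType).

Lemma ge0_integral_mixture (G G1 G2 : {measure set T -> \bar R}) (l : R)
    (D : set T) (f : T -> \bar R) :
  (0 <= l <= 1)%R ->
  (forall A, measurable A -> G A = l%:E * G1 A + (1 - l)%:E * G2 A) ->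
  measurable D -> measurable_fun D f -> (forall x, D x -> 0 <= f x) ->
  \int[G]_(x in D) f x =
    l%:E * \int[G1]_(x in D) f x + (1 - l)%:E * \int[G2]_(x in D) f x.
Proof.
move=> /andP[l0 l1] hG mD mf f0; have l0' : (0 <= 1 - l)%R by rewrite subr_ge0.
rewrite (eq_measure_integral
  (measure_add (mscale (NngNum l0) G1) (mscale (NngNum l0') G2))); last first.
  move=> A mA _; rewrite hG //.
  by rewrite /measure_add /= /msum 2!big_ord_recl /= big_ord0 adde0.
by rewrite ge0_integral_measure_add // !ge0_integral_mscale.
Qed.

End integral_mixture.

Section measure_with_density.
Local Open Scope ereal_scope.
Context d (T : measurableType d) (R : realType) (mu : {measure set T -> \bar R})
  (f : T -> \bar R).

(* The unused hypotheses let unification find the measure instance below. *)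
Definition measure_with_density (_ : measurable_fun setT f)
  (_ : forall x, 0 <= f x) (A : set T) : \bar R := \int[mu]_(x in A) f x.

Variables (mf : measurable_fun setT f) (f0 : forall x, 0 <= f x).

Let density0 : measure_with_density mf f0 set0 = 0.
Proof. exact: integral_set0. Qed.

Let density_ge0 A : 0 <= measure_with_density mf f0 A.
Proof. exact: integral_ge0. Qed.

HB.instance Definition _ := isMeasure.Build _ _ _ (measure_with_density mf f0)
  density0 density_ge0 (semi_sigma_additive_nng_induced (mu := mu) mf f0).

End measure_with_density.

Lemma mnormalizeE d (T : measurableType d) (R : realType)
    (mu : {measure set T -> \bar R}) (P : probability T R) (A : set T) :
  (0 < mu setT)%E -> mu setT \is a fin_num ->
  mnormalize mu P A = (mu A * ((fine (mu setT))^-1)%:E)%E.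
Proof.
move=> mu_gt0 mu_fin; rewrite /mnormalize gt_eqF //=.
by move: mu_fin; rewrite fin_numE => /andP[_ /negbTE ->].
Qed.

Section tilt.
Local Open Scope ereal_scope.
Context d (T : measurableType d) (R : realType) (w : T -> \bar R) (M : R).
Hypotheses (mw : measurable_fun setT w) (w_gt0 : forall x, 0 < w x)
  (w_le : forall x, w x <= M%:E).

Definition tilt (G : probability T R) (A : set T) : \bar R :=
  \int[G]_(x in A) w x * ((fine (\int[G]_(x in setT) w x))^-1)%:E.

Definition tilt_mass (G : probability T R) : R := fine (\int[G]_(x in setT) w x).

Let w_ge0 x : 0 <= w x. Proof. exact/ltW. Qed.

Lemma tilt_integral_fin_num (G : probability T R) (A : set T) : measurable A ->
  \int[G]_(x in A) w x \is a fin_num.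
Proof.
move=> mA; rewrite ge0_fin_numE ?integral_ge0 //.
apply: (@le_lt_trans _ _ (\int[G]_(x in A) (cst M%:E) x)).
  by apply: ge0_le_integral => //; exact: measurable_funTS.
by rewrite integral_cst // ltey_eq fin_numM ?fin_num_measure.
Qed.

Lemma tilt_massE (G : probability T R) :
  \int[G]_(x in setT) w x = (tilt_mass G)%:E.
Proof. by rewrite fineK // tilt_integral_fin_num. Qed.

Lemma tilt_mass_gt0 (G : probability T R) : (0 < tilt_mass G)%R.
Proof.
by rewrite -lte_fin -tilt_massE integral_gt0 //= probability_setT lte01.
Qed.

Lemma tilt_probability (G : probability T R) :
  exists P : probability T R, forall A, P A = tilt G A.
Proof.
exists (mnormalize (measure_with_density G mw w_ge0) G) => A.
apply: mnormalizeE; last exact: tilt_integral_fin_num.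
by have := tilt_mass_gt0 G; rewrite -lte_fin -tilt_massE.
Qed.

Lemma tilt_mixture (G G1 G2 : probability T R) (l : R) : (0 <= l <= 1)%R ->
  (forall A, measurable A -> G A =
    (reweight l (tilt_mass G1) (tilt_mass G2))%:E * G1 A
    + (1 - reweight l (tilt_mass G1) (tilt_mass G2))%:E * G2 A) ->
  forall A, measurable A -> tilt G A = l%:E * tilt G1 A + (1 - l)%:E * tilt G2 A.
Proof.
move=> l01 hG A mA; have c1 := tilt_mass_gt0 G1; have c2 := tilt_mass_gt0 G2.
have lam01 := reweight_itv l01 c1 c2.
rewrite /tilt !(ge0_integral_mixture lam01 hG) //; last exact: measurable_funTS.
rewrite !tilt_massE -(fineK (tilt_integral_fin_num G1 mA)).
rewrite -(fineK (tilt_integral_fin_num G2 mA)) /=.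
by rewrite -!(EFinM, EFinD) reweight_ratio.
Qed.

End tilt.

Section folded_normal.
Variable R : realType.
Implicit Types z mu : R.

Lemma phiE z mu : phi z mu = normal_pdf mu 1 z.
Proof.
rewrite /normal_pdf oner_eq0 /phi /normal_peak /normal_fun expr1n mul1r.
by rewrite mulr_natl mulrC.
Qed.

Lemma phiN z mu : phi (- z) mu = phi z (- mu).
Proof. by rewrite /phi -opprD sqrrN opprK. Qed.

Lemma phi_gt0 z mu : 0 < phi z mu.
Proof. by rewrite divr_gt0 ?expR_gt0 // sqrtr_gt0 mulr_gt0 ?pi_gt0. Qed.

Lemma phi_fold_gt0 z mu : 0 < phi_fold z mu.
Proof. by rewrite addr_gt0 ?phi_gt0. Qed.

Lemma phi_foldE z mu : phi_fold z mu = normal_pdf mu 1 z + normal_pdf (- mu) 1 z.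
Proof. by rewrite /phi_fold phiN !phiE. Qed.

Lemma measurable_phi_fold mu : measurable_fun setT (fun z => phi_fold z mu).
Proof.
under eq_fun do rewrite phi_foldE.
by apply: measurable_funD; exact: measurable_normal_pdf.
Qed.

Lemma measurable_phi_fold_pair :
  measurable_fun setT (fun p : R * R => phi_fold p.2 p.1).
Proof.
rewrite /phi_fold /phi; apply: measurable_funD; apply: measurable_funM => //;
  apply: measurableT_comp => //; apply: measurable_funM => //;
  apply: measurableT_comp => //; apply: measurable_funX;
  apply: measurable_funB => //.
exact: measurableT_comp.
Qed.

Local Open Scope ereal_scope.

Lemma integral_phi_fold mu : \int[lebesgue_measure]_z (phi_fold z mu)%:E = 2%:E.
Proof.
under eq_integral do rewrite phi_foldE EFinD.
rewrite ge0_integralD //; last 4 first.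
- by move=> z _; rewrite lee_fin normal_pdf_ge0.
- by apply/measurable_EFinP; exact: measurable_normal_pdf.
- by move=> z _; rewrite lee_fin normal_pdf_ge0.
- by apply/measurable_EFinP; exact: measurable_normal_pdf.
by rewrite !integral_normal_pdf.
Qed.

Variables (S : set R) (mS : measurable S).

Lemma measurable_PhiS : measurable_fun setT (PhiS S).
Proof.
have -> : PhiS S = fubini_F lebesgue_measure
    (fun p : R * R => ((\1_S p.2 : R) * phi_fold p.2 p.1)%:E).
  apply/funext => mu; rewrite /PhiS /fubini_F [LHS]integral_mkcond.
  apply: eq_integral => z _ /=; rewrite /patch indicE.
  by case: (z \in S); rewrite ?mul1r ?mul0r.
apply: measurable_fun_fubini_tonelli_F => [|p].
  apply/measurable_EFinP; apply: measurable_funM measurable_phi_fold_pair.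
  exact: measurableT_comp (measurable_indic mS) measurable_snd.
by rewrite lee_fin mulr_ge0 // ltW // phi_fold_gt0.
Qed.

Lemma PhiS_gt0 : 0 < lebesgue_measure S -> forall mu, 0 < PhiS S mu.
Proof.
move=> S_gt0 mu; apply: integral_gt0 => // [|z _].
  by apply/measurable_funTS/measurable_EFinP; exact: measurable_phi_fold.
by rewrite lte_fin phi_fold_gt0.
Qed.

Lemma PhiS_le2 mu : PhiS S mu <= 2%:E.
Proof.
rewrite -(integral_phi_fold mu); apply: ge0_subset_integral => //.
- by apply/measurable_EFinP; exact: measurable_phi_fold.
- by move=> z _; rewrite lee_fin ltW // phi_fold_gt0.
Qed.

Lemma TiltE : Tilt S = tilt (PhiS S).
Proof. by []. Qed.

End folded_normal.

Theorem proposition2 (R : realType) (S : set R) (Gs : set (probability R R))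
  (hSm : measurable S) (hSpos : S `<=` [set x | 0 <= x])
  (hSleb : (0 < lebesgue_measure S)%E)
  (hconv : convex_class [set (fun A => (G : probability R R) A) | G in Gs]) :
  (forall G, Gs G -> is_prob_distr (Tilt S G)) /\
  convex_class [set Tilt S G | G in Gs].
Proof.
have mPhi := measurable_PhiS hSm.
have Phi_gt0 := PhiS_gt0 hSm hSleb.
have Phi_le2 := PhiS_le2 hSm.
split=> [G _|_ _ [G1 G1s <-] [G2 G2s <-] l l01].
  have [P PE] := tilt_probability mPhi Phi_gt0 Phi_le2 G.
  by exists P => A _; rewrite PE TiltE.
have lam01 := reweight_itv l01 (tilt_mass_gt0 mPhi Phi_gt0 Phi_le2 G1)
  (tilt_mass_gt0 mPhi Phi_gt0 Phi_le2 G2).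
have [_ [[G Gs_G <-] GE]] := hconv _ _ (ex_intro2 _ _ G1 G1s erefl)
  (ex_intro2 _ _ G2 G2s erefl) _ lam01.
exists (Tilt S G); split; first by exists G.
by rewrite !TiltE; exact: tilt_mixture GE.
Qed.
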